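(* Let $G$ be a finite simple graph on $[d]$. Then $K_G=\langle [I_G]_2\rangle+M_G$.
   Context: A stable set of $G$ is a subset of $[d]$ with no edge of $G$ (including $\emptyset$ and singletons); $S(G)$ is the set of stable sets; $R[G]=\mathbb{K}[x_S : S\in S(G)]$ over a field $\mathbb{K}$, all variables of degree $1$. $I_G$ is the kernel of $\pi:R[G]\to\mathbb{K}[t_1,\dots,t_d,s]$, $\pi(x_S)=s\prod_{j\in S}t_j$; $\langle [I_G]_2\rangle$ is the ideal generated by the degree-$2$ homogeneous elements of $I_G$. $J_G$ is the ideal generated by all $x_{S_1}x_{S_2}-x_{S_3}x_{S_4}$ with $S_i\in S(G)$, $S_1\cap S_2=S_3\cap S_4=\emptyset$, $S_1\cup S_2=S_3\cup S_4$. $M_G=\langle x_Sx_T : S,T\in S(G),\ S\cap T\neq\emptyset\rangle$ and $K_G=J_G+M_G$. *)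

From HB Require Import structures.
From mathcomp Require Import all_boot all_order all_algebra.
From mathcomp Require Import mpoly.

Set Implicit Arguments.
Unset Strict Implicit.
Unset Printing Implicit Defensive.

Import GRing.Theory.
Local Open Scope ring_scope.

(* A graph on [d] = 'I_d is given by an edge relation e (assumed symmetric
   and irreflexive in the theorem: a finite simple graph). *)

Definition stable (d : nat) (e : rel 'I_d) (S : {set 'I_d}) : bool :=
  [forall i in S, forall j in S, ~~ e i j].

Definition stab_sets (d : nat) (e : rel 'I_d) : {set {set 'I_d}} :=
  [set S | stable e S].

Definition nvars (d : nat) (e : rel 'I_d) : nat := #|stab_sets e|.

(* R[G] = K[x_S : S in S(G)], the variable 'X_i corresponding to the
   stable set [stS e i]. *)
Definition RG (K : fieldType) (d : nat) (e : rel 'I_d) := {mpoly K[nvars e]}.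

Definition stS (d : nat) (e : rel 'I_d) (i : 'I_(nvars e)) : {set 'I_d} :=
  enum_val i.

(* Target ring K[t_1,...,t_d,s] = {mpoly K[d.+1]}: t_j is the variable
   (widen_ord _ j) for j : 'I_d, and s is the last variable ord_max. *)
Definition tvar (K : fieldType) (d : nat) (j : 'I_d) : {mpoly K[d.+1]} :=
  'X_(widen_ord (leqnSn d) j).
Definition svar (K : fieldType) (d : nat) : {mpoly K[d.+1]} := 'X_(@ord_max d).

Definition pi_img (K : fieldType) (d : nat) (e : rel 'I_d) (i : 'I_(nvars e))
  : {mpoly K[d.+1]} :=
  svar K d * \prod_(j in stS i) tvar K j.

Definition piG (K : fieldType) (d : nat) (e : rel 'I_d) (p : RG K e)
  : {mpoly K[d.+1]} :=
  p \mPo [tuple pi_img K i | i < nvars e].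

Definition IG (K : fieldType) (d : nat) (e : rel 'I_d) (p : RG K e) : Prop :=
  piG p = 0.

Definition ideal_gen (R : comPzRingType) (P : R -> Prop) (p : R) : Prop :=
  exists s : seq (R * R), (forall q, q \in s -> P q.2) /\
                          p = \sum_(q <- s) q.1 * q.2.

Definition ideal_add (R : comPzRingType) (I J : R -> Prop) (p : R) : Prop :=
  exists a b, I a /\ J b /\ p = a + b.

Definition IG2gen (K : fieldType) (d : nat) (e : rel 'I_d) (p : RG K e) : Prop :=
  p \is 2.-homog /\ IG p.

Definition JGgen (K : fieldType) (d : nat) (e : rel 'I_d) (p : RG K e) : Prop :=
  exists i1 i2 i3 i4 : 'I_(nvars e),
    [/\ stS i1 :&: stS i2 = set0, stS i3 :&: stS i4 = set0,
        stS i1 :|: stS i2 = stS i3 :|: stS i4 &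
        p = 'X_i1 * 'X_i2 - 'X_i3 * 'X_i4].

Definition MGgen (K : fieldType) (d : nat) (e : rel 'I_d) (p : RG K e) : Prop :=
  exists i j : 'I_(nvars e), stS i :&: stS j != set0 /\ p = 'X_i * 'X_j.

Definition JG K d e := ideal_gen (@JGgen K d e).
Definition MG K d e := ideal_gen (@MGgen K d e).
Definition KG K d e := ideal_add (@JG K d e) (@MG K d e).
Definition IG2ideal K d e := ideal_gen (@IG2gen K d e).

From mathcomp Require Import all_boot all_order all_algebra.
From mathcomp Require Import mpoly.

(* The binomials generating J_G lie in ker pi, so K_G is contained in
   <[I_G]_2> + M_G.  Conversely, let p be a quadratic element of ker pi.  A
   monomial x_S x_T of p with S meeting T lies in M_G.  If S and T are
   disjoint, pi(x_S x_T) = s^2 prod_{S u T} t_j is squarefree in the t's, and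
   since pi(p) = 0 some other monomial x_U x_V of p has the same image, which
   forces U, V disjoint with U u V = S u T; subtracting a multiple of the
   J_G-generator x_S x_T - x_U x_V removes x_S x_T from the support of p
   without leaving ker pi.  Nothing about the graph is used beyond the fact
   that the variables are indexed by sets of vertices. *)

Set Implicit Arguments.
Unset Strict Implicit.
Unset Printing Implicit Defensive.
Import GRing.Theory.
Local Open Scope ring_scope.

Section IdealGen.
Variable R : comPzRingType.
Implicit Types (P Q : R -> Prop) (a b : R).

Lemma ideal_gen0 P : ideal_gen P 0.
Proof. by exists [::]; rewrite big_nil. Qed.

Lemma ideal_gen_mem P a : P a -> ideal_gen P a.
Proof.
move=> Pa; exists [:: (1, a)]; rewrite big_seq1 mul1r.
by split=> // q; rewrite inE => /eqP ->.
Qed.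

Lemma ideal_genD P a b : ideal_gen P a -> ideal_gen P b -> ideal_gen P (a + b).
Proof.
move=> [s1 [Ps1 ->]] [s2 [Ps2 ->]]; exists (s1 ++ s2); rewrite big_cat.
by split=> // q; rewrite mem_cat => /orP [/Ps1|/Ps2].
Qed.

Lemma ideal_genMl P r a : ideal_gen P a -> ideal_gen P (r * a).
Proof.
move=> [s [Ps ->]]; exists [seq (r * q.1, q.2) | q <- s]; split.
  by move=> q /mapP [q' /Ps ? ->].
by rewrite big_map mulr_sumr; apply: eq_bigr => q _; rewrite mulrA.
Qed.

Lemma ideal_gen_sum P (I : eqType) (r : seq I) (F : I -> R) :
  (forall i, i \in r -> ideal_gen P (F i)) -> ideal_gen P (\sum_(i <- r) F i).
Proof.
elim: r => [|i r IHr] PF; first by rewrite big_nil; apply: ideal_gen0.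
rewrite big_cons; apply: ideal_genD; first by apply: PF; rewrite mem_head.
by apply: IHr => j jr; apply: PF; rewrite inE jr orbT.
Qed.

Lemma ideal_gen_trans P Q a :
  (forall x, P x -> ideal_gen Q x) -> ideal_gen P a -> ideal_gen Q a.
Proof.
move=> PQ [s [Ps ->]]; apply: ideal_gen_sum => q /Ps /PQ.
exact: ideal_genMl.
Qed.

Lemma ideal_add_genE P Q a :
  ideal_add (ideal_gen P) (ideal_gen Q) a <-> ideal_gen (fun x => P x \/ Q x) a.
Proof.
split.
  move=> [b [c [Pb [Qc ->]]]]; apply: ideal_genD.
    by apply: ideal_gen_trans Pb => x Px; apply: ideal_gen_mem; left.
  by apply: ideal_gen_trans Qc => x Qx; apply: ideal_gen_mem; right.
move=> [s [PQs ->]]; elim: s PQs => [|q s IHs] PQs.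
  by exists 0, 0; rewrite big_nil addr0; split; [|split=> //]; apply: ideal_gen0.
rewrite big_cons.
have [b [c [Pb [Qc ->]]]] :
    ideal_add (ideal_gen P) (ideal_gen Q) (\sum_(x <- s) x.1 * x.2).
  by apply: IHs => x xs; apply: PQs; rewrite inE xs orbT.
have [Pq|Qq] := PQs q (mem_head _ _).
  exists (q.1 * q.2 + b), c; rewrite addrA; split=> //.
  by apply/ideal_genD/Pb/ideal_genMl/ideal_gen_mem.
exists b, (q.1 * q.2 + c); rewrite addrCA; split=> //.
by split=> //; apply/ideal_genD/Qc/ideal_genMl/ideal_gen_mem.
Qed.

End IdealGen.

Lemma mpolyX_inj (R : nzRingType) (k : nat) : injective (@mpolyX k R).
Proof.
move=> m1 m2 X12; have := mcoeffX R m1 m2; rewrite X12 mcoeffX eqxx.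
by case: eqP => // _ /eqP; rewrite oner_eq0.
Qed.

Lemma mdeg2P (k : nat) (m : 'X_{1..k}) :
  mdeg m = 2%N -> exists i j, m = (U_(i) + U_(j))%MM.
Proof.
move=> m2; have [i mi|no_pos] := pickP (fun i => 0 < m i)%N; last first.
  suff m_eq0 : m = 0%MM by rewrite m_eq0 mdeg0 in m2.
  by apply/mnmP => i; rewrite mnm0E; have := no_pos i; case: (m i).
have Uim : (U_(i) <= m)%MM by rewrite lep1mP -lt0n.
have /mdeg1P [j /eqP mUj] : mdeg (m - U_(i))%MM == 1%N.
  by have := mdegD (m - U_(i))%MM U_(i); rewrite submK // mdeg1 m2 addn1 => -[->].
by exists j, i; rewrite -mUj submK.
Qed.

Section StableSetRing.
Variables (K : fieldType) (d : nat) (e : rel 'I_d).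
Local Notation n := (nvars e).
Local Notation wd := (widen_ord (leqnSn d)).

Definition pi_exp (i : 'I_n) : 'X_{1..d.+1} :=
  (U_(@ord_max d) + \sum_(j in stS i) U_(wd j))%MM.

Definition pi_mnm (m : 'X_{1..n}) : 'X_{1..d.+1} :=
  (\sum_(k < n) pi_exp k *+ m k)%MM.

Definition t_squarefree (mu : 'X_{1..d.+1}) : bool :=
  [forall x : 'I_d, mu (wd x) <= 1]%N.

Definition KGgen (p : RG K e) : Prop := JGgen p \/ MGgen p.

Lemma pi_imgE i : pi_img K i = 'X_[pi_exp i].
Proof.
by rewrite /pi_img /svar /tvar mpolyXD (big_morph _ (@mpolyXD _ K) (@mpolyX0 _ K)).
Qed.

Lemma piG_X i : piG ('X_i : RG K e) = pi_img K i.
Proof. by rewrite /piG comp_mpolyXU -tnth_nth tnth_mktuple. Qed.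

Lemma piG_mpolyX m : piG ('X_[m] : RG K e) = 'X_[pi_mnm m].
Proof.
rewrite /piG comp_mpolyX -mprodXnE.
by apply: eq_bigr => k _; rewrite tnth_mktuple pi_imgE.
Qed.

Lemma pi_mnm2 i j : pi_mnm (U_(i) + U_(j))%MM = (pi_exp i + pi_exp j)%MM.
Proof.
apply: (@mpolyX_inj K); rewrite -piG_mpolyX mpolyXD /piG rmorphM /=.
by rewrite -!/(piG _) !piG_X !pi_imgE -mpolyXD.
Qed.

Lemma pi_exp_t i x : pi_exp i (wd x) = (x \in stS i).
Proof.
rewrite mnmDE mnm1E mnm_sumE.
have -> : (ord_max == wd x) = false by rewrite -val_eqE /= gtn_eqF.
rewrite add0n (eq_bigr (fun j => (j == x) : nat)) => [|j _]; last by rewrite mnm1E.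
case: (boolP (x \in stS i)) => xS; last first.
  by rewrite big1 // => j jS; case: eqP => // jx; rewrite -jx jS in xS.
by rewrite (bigD1 x) //= eqxx big1 // => j /andP [_ /negbTE ->].
Qed.

Lemma pi_mnm2_t i j x :
  pi_mnm (U_(i) + U_(j))%MM (wd x) = ((x \in stS i) + (x \in stS j))%N.
Proof. by rewrite pi_mnm2 mnmDE !pi_exp_t. Qed.

Lemma pi_mnm2_squarefree i j :
  t_squarefree (pi_mnm (U_(i) + U_(j))%MM) = (stS i :&: stS j == set0).
Proof.
apply/forallP/eqP => [sqf|disj x]; first apply/setP => x.
  by have := sqf x; rewrite pi_mnm2_t !inE; do 2!case: (_ \in _).
move/setP/(_ x): disj; rewrite pi_mnm2_t !inE.
by do 2!case: (_ \in _).
Qed.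

Lemma MGgen_X2 i j :
  ~~ t_squarefree (pi_mnm (U_(i) + U_(j))%MM) -> MGgen ('X_i * 'X_j : RG K e).
Proof. by rewrite pi_mnm2_squarefree => meet; exists i, j. Qed.

Lemma JGgen_X2 i j k l :
  t_squarefree (pi_mnm (U_(i) + U_(j))%MM) ->
  pi_mnm (U_(i) + U_(j))%MM = pi_mnm (U_(k) + U_(l))%MM ->
  JGgen ('X_i * 'X_j - 'X_k * 'X_l : RG K e).
Proof.
move=> sqf pi_eq; exists i, j, k, l; split=> //; apply/eqP.
- by rewrite -pi_mnm2_squarefree.
- by rewrite -pi_mnm2_squarefree -pi_eq.
apply/eqP/setP => x; have := congr1 (fun mu : 'X_{1..d.+1} => mu (wd x)) pi_eq.
by rewrite /= !pi_mnm2_t !inE; do 4!case: (_ \in _).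
Qed.

Lemma IG2gen_JGgen (p : RG K e) : JGgen p -> IG2gen p.
Proof.
move=> [i1 [i2 [i3 [i4 [disj12 disj34 union ->]]]]]; split.
  have X2_homog (i j : 'I_n) : ('X_i * 'X_j : RG K e) \is 2.-homog.
    by rewrite -[2%N]/(1 + 1)%N dhomogM // dhomogX /= mdeg1.
  by rewrite rpredB.
rewrite /IG /piG rmorphB !rmorphM /= -!/(piG _) !piG_X /pi_img.
rewrite mulrACA [in X in _ - X]mulrACA -!bigU -?setI_eq0 ?disj12 ?disj34 //.
rewrite (eq_bigl (mem (stS i1 :|: stS i2))) => [|x]; last by rewrite !inE.
rewrite [in X in _ - X](eq_bigl (mem (stS i3 :|: stS i4))) => [|x]; last by rewrite !inE.
by rewrite union subrr.
Qed.

Lemma mcoeff_piG (p : RG K e) mu :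
  (piG p)@_mu = \sum_(m <- msupp p) p@_m * (pi_mnm m == mu)%:R.
Proof.
rewrite /piG comp_mpolyEX (raddf_sum (mcoeff _)); apply: eq_bigr => m _.
by rewrite /= mcoeffZ -/(piG _) piG_mpolyX mcoeffX.
Qed.

Lemma piG_kernel_partner (p : RG K e) m : piG p = 0 -> m \in msupp p ->
  exists2 m', m' \in msupp p & m' != m /\ pi_mnm m' = pi_mnm m.
Proof.
move=> ker_p mp.
suff /hasP [m' m'p /andP [m'm /eqP pi_eq]] :
    has (fun m' => (m' != m) && (pi_mnm m' == pi_mnm m)) (msupp p).
  by exists m'.
apply/negPn/negP => /hasPn no_partner.
have := mcoeff_piG p (pi_mnm m); rewrite ker_p mcoeff0.
rewrite (bigD1_seq m) ?msupp_uniq //= eqxx mulr1 big1 ?addr0 => [/esym/eqP|m' m'm].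
  by rewrite mcoeff_eq0 mp.
case: (boolP (m' \in msupp p)) => m'p; last by rewrite memN_msupp_eq0 ?mul0r.
by have := no_partner m' m'p; rewrite m'm /= => /negbTE ->; rewrite mulr0.
Qed.

Lemma size_msupp_cancel (p : RG K e) m m' : m \in msupp p -> m' \in msupp p ->
  m' != m -> (size (msupp (p - p@_m *: ('X_[m] - 'X_[m']))) < size (msupp p))%N.
Proof.
move=> mp m'p m'm; set c := p@_m.
have -> : p - c *: ('X_[m] - 'X_[m']) = (p - c *: 'X_[m]) + c *: 'X_[m'].
  by rewrite scalerBr opprB addrA [_ - _ + _]addrAC.
have sub : {subset msupp (p - c *: 'X_[m] + c *: 'X_[m']) <= rem m (msupp p)}.
  move=> x /msuppD_le; rewrite mem_cat (perm_mem (msupp_rem p m)).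
  case/orP => [//|/msuppZ_le]; rewrite msuppX mem_seq1 => /eqP ->.
  by rewrite mem_rem_uniq ?msupp_uniq // inE m'm.
apply: leq_ltn_trans (uniq_leq_size (msupp_uniq _) sub) _.
by rewrite size_rem // ltn_predL; case: (msupp p) mp.
Qed.

Lemma ideal_gen_KGgen (p : RG K e) :
  p \is 2.-homog -> piG p = 0 -> ideal_gen KGgen p.
Proof.
move: {2}(size (msupp p)) (leqnn (size (msupp p))) => N.
elim: N p => [|N IHN] p size_p p_homog ker_p.
  have -> : p = 0 by apply/msuppnil0/size0nil/eqP; rewrite -leqn0.
  exact: ideal_gen0.
have supp_deg2 m : m \in msupp p -> exists i j, m = (U_(i) + U_(j))%MM.
  by move/(dhomog_mf p_homog)/mdeg2P.
have [/hasP [m mp sqf]|/hasPn nsqf] :=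
  boolP (has (t_squarefree \o pi_mnm) (msupp p)).
  have [m' m'p [m'm pi_eq]] := piG_kernel_partner ker_p mp.
  have Jmm' : JGgen ('X_[m] - 'X_[m'] : RG K e).
    have [[i [j Em]] [k [l Em']]] := (supp_deg2 m mp, supp_deg2 m' m'p).
    by rewrite Em Em' !mpolyXD; apply: JGgen_X2; rewrite -?Em -?Em'.
  have [binom_homog binom_ker] := IG2gen_JGgen Jmm'.
  set q := p@_m *: ('X_[m] - 'X_[m']).
  rewrite -(subrK q p); apply: ideal_genD.
    apply: IHN.
    - by rewrite -ltnS (leq_trans _ size_p) // size_msupp_cancel.
    - by rewrite rpredB // rpredZ.
    - rewrite /piG raddfB /q /= comp_mpolyZ -!/(piG _).
      by rewrite ker_p binom_ker scaler0 subrr.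
  by rewrite /q -mul_mpolyC; apply/ideal_genMl/ideal_gen_mem; left.
rewrite (mpolyE p); apply: ideal_gen_sum => m mp; have [i [j Em]] := supp_deg2 m mp.
rewrite -mul_mpolyC Em mpolyXD; apply/ideal_genMl/ideal_gen_mem; right.
by apply: MGgen_X2; rewrite -Em; apply: nsqf.
Qed.

End StableSetRing.

Theorem corollary6p2 (K : fieldType) (d : nat) (e : rel 'I_d) :
  (forall x y, e x y = e y x) -> (forall x, ~~ e x x) ->
  forall p : RG K e, KG p <-> ideal_add (@IG2ideal K d e) (@MG K d e) p.
Proof.
move=> _ _ p; rewrite /KG /JG /MG /IG2ideal !ideal_add_genE.
split; apply: ideal_gen_trans => q [Jq|Mq]; try by apply: ideal_gen_mem; right.
  by apply: ideal_gen_mem; left; apply: IG2gen_JGgen.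
by case: Jq; apply: ideal_gen_KGgen.
Qed.
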